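(* Let $q$ be a power of an odd prime $p$, $G=\mathrm{SU}_3(q)$, and let $\mathcal{C}=C_2^{(0)}$. Then $K_{\mathcal{C}}$ is irreducible.
   Context: $\mathrm{SU}_3(q)$ is the group of determinant-one matrices $M\in\mathrm{GL}_3(q^2)$ with $M^*JM=J$, where $J$ has ones on the anti-diagonal and zeros elsewhere and $M^*$ is the transpose of $M$ with every entry raised to the $q$-th power. $C_2^{(0)}$ is the $\mathrm{SU}_3(q)$-conjugacy class containing the matrices $\begin{pmatrix}1&0&a\\0&1&0\\0&0&1\end{pmatrix}$ with $a\in\mathbb{F}_{q^2}^\times$, $a+a^q=0$. For a finite group $G$ and a subset $\mathcal{C}\subseteq G\setminus\{1\}$ closed under conjugation, the Killing form is $K_{\mathcal{C}}(a,b)=|C_G(ab)\cap\mathcal{C}|$ on the basis $\mathcal{C}$; it is irreducible if the graph with vertex set $\mathcal{C}$, in which distinct $a,b$ are adjacent iff $C_G(ab)\cap\mathcal{C}\neq\emptyset$, is connected. *)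

From HB Require Import structures.
From mathcomp Require Import all_boot all_order all_algebra all_fingroup all_field.
Set Implicit Arguments. Unset Strict Implicit. Unset Printing Implicit Defensive.
Import GRing.Theory.
Local Open Scope ring_scope.
Local Open Scope group_scope.

(* Killing form K_C(a,b) = |C_G(ab) ∩ C| on a finite group, and its
   irreducibility: the graph on C (distinct a,b adjacent iff C_G(ab) ∩ C
   is nonempty) is connected. *)
Definition killing_form (gT : finGroupType) (G C : {set gT}) (a b : gT) : nat :=
  #|'C_G[a * b] :&: C|.

Definition killing_adj (gT : finGroupType) (G C : {set gT}) : rel gT :=
  [rel a b | [&& a \in C, b \in C, a != b & (0 < killing_form G C a b)%N]].

Definition killing_irreducible (gT : finGroupType) (G C : {set gT}) : Prop :=
  forall a b, a \in C -> b \in C -> connect (killing_adj G C) a b.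

Definition Jmx (F : fieldType) : 'M[F]_3 :=
  \matrix_(i < 3, j < 3) (if (i + j == 2)%N then 1%R else 0%R).

Definition qstar (F : fieldType) (q : nat) (M : 'M[F]_3) : 'M[F]_3 :=
  (map_mx (fun x : F => (x ^+ q)%R) M)^T.

(* SU_3(q) inside GL_3(F), where F is a field with q^2 elements *)
Definition SU3 (F : finFieldType) (q : nat) : {set {'GL_3[F]}} :=
  [set g : {'GL_3[F]} | (\det (GLval g) == 1%R)
      && (qstar q (GLval g) *m Jmx F *m GLval g == Jmx F)].

Definition transv (F : fieldType) (a : F) : 'M[F]_3 :=
  (1%:M + a *: delta_mx 0 2)%R.

Definition C20 (F : finFieldType) (q : nat) (a : F) : {set {'GL_3[F]}} :=
  [set g : {'GL_3[F]} | [exists h in SU3 F q,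
      GLval g == invmx (GLval h) *m transv a *m GLval h]].

From HB Require Import structures.
From mathcomp Require Import all_boot all_order all_algebra all_fingroup all_field.
From mathcomp Require Import ring.
Set Implicit Arguments. Unset Strict Implicit. Unset Printing Implicit Defensive.
Import GRing.Theory.
Local Open Scope ring_scope.

(* Write s for the involution x |-> x^q of F, h(u, w) = u^* J w for the hermitian form
   preserved by SU_3(q), and t_v = 1 + a v v^* J.  The class C consists exactly of the
   t_v with v a nonzero isotropic vector, because SU_3(q) is transitive on such vectors.
   Transvections with proportional centres commute, hence are adjacent.  If
   a h(u, w) = 2, then u + w is isotropic and t_u t_w (u + w) = -(u + w), so t_(u+w)
   commutes with t_u t_w and t_u, t_w are adjacent.  For any t_v, either v is a multiple
   of e0, or h(e0, v) <> 0 and some multiple w of v has a h(e0, w) = 2: in both cases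
   t_v is at most two steps away from t_e0.  Adjacency is symmetric because C is a
   conjugacy class, so the graph is connected. *)

Section KillingGraph.
Local Open Scope group_scope.
Variables (gT : finGroupType) (G : {group gT}) (C : {set gT}).
Hypothesis sCG : C \subset G.

Lemma killing_adj_sym : G \subset 'N(C) -> symmetric (killing_adj G C).
Proof.
move=> nCG; suff adj_sym a b : killing_adj G C a b -> killing_adj G C b a.
  by move=> a b; apply/idP/idP; apply: adj_sym.
case/and4P=> aC bC neq_ab /card_gt0P[c /setIP[/setIP[cG cabc] cC]].
rewrite /killing_adj /= bC aC eq_sym neq_ab; apply/card_gt0P; exists (c ^ a).
have aG := subsetP sCG a aC.
rewrite inE (memJ_norm c (subsetP nCG a aG)) cC andbT inE groupJ //=.
have -> : b * a = (a * b) ^ a by rewrite conjgE !mulgA mulVg mul1g.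
by rewrite cent1J memJ_conjg.
Qed.

Lemma killing_connect_commute a b c : a \in C -> b \in C -> c \in C ->
  commute c (a * b) -> connect (killing_adj G C) a b.
Proof.
move=> aC bC cC cab; have [-> | neq_ab] := eqVneq a b; first exact: connect0.
apply: connect1; rewrite /killing_adj /= aC bC neq_ab; apply/card_gt0P; exists c.
by rewrite inE cC andbT inE (subsetP sCG) //=; apply/cent1P.
Qed.

End KillingGraph.

Section GeneralLinear.
Variables (n : nat) (R : finComUnitRingType).

(* [GLof M] is the identity when [M] is singular. *)
Definition GLof (M : 'M[R]_n.+1) : {'GL_n.+1[R]} := insubd (1%g : {'GL_n.+1[R]}) M.

Lemma GLofK M : M \in unitmx -> GLval (GLof M) = M.
Proof. by move=> Mu; rewrite insubdK. Qed.

Lemma GLval_inj : injective (@GLval n.+1 R).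
Proof. exact: val_inj. Qed.

Lemma GL_conjgE (g h : {'GL_n.+1[R]}) : GLval (g ^ h)%g = invmx h *m g *m h.
Proof. by rewrite conjgE !GL_MxE GL_VxE mulmxA. Qed.

End GeneralLinear.

Section Coordinates3.
Variable R : comNzRingType.

Definition mx3 (a00 a01 a02 a10 a11 a12 a20 a21 a22 : R) : 'M[R]_3 :=
  \matrix_(i, j) nth 0 (nth [::] [:: [:: a00; a01; a02];
                                     [:: a10; a11; a12];
                                     [:: a20; a21; a22]] i) j.

Definition col3 (x0 x1 x2 : R) : 'cV[R]_3 := \col_i nth 0 [:: x0; x1; x2] i.

Definition e0 : 'cV[R]_3 := col3 1 0 0.

Lemma col3_eta (v : 'cV[R]_3) : v = col3 (v 0 0) (v 1 0) (v 2 0).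
Proof.
apply/matrixP => i j; rewrite mxE [j]ord1.
by case: i => [[|[|[|//]]] ?]; congr (v _ _); apply: val_inj.
Qed.

Lemma scale_col3 c x0 x1 x2 : c *: col3 x0 x1 x2 = col3 (c * x0) (c * x1) (c * x2).
Proof. by apply/matrixP => i j; rewrite !mxE; case: i => [[|[|[|//]]] ?]. Qed.

Lemma mulmx3 a00 a01 a02 a10 a11 a12 a20 a21 a22 b00 b01 b02 b10 b11 b12 b20 b21 b22 :
  mx3 a00 a01 a02 a10 a11 a12 a20 a21 a22 *m mx3 b00 b01 b02 b10 b11 b12 b20 b21 b22 =
  mx3 (a00*b00+a01*b10+a02*b20) (a00*b01+a01*b11+a02*b21) (a00*b02+a01*b12+a02*b22)
      (a10*b00+a11*b10+a12*b20) (a10*b01+a11*b11+a12*b21) (a10*b02+a11*b12+a12*b22)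
      (a20*b00+a21*b10+a22*b20) (a20*b01+a21*b11+a22*b21) (a20*b02+a21*b12+a22*b22).
Proof.
apply/matrixP => i j; rewrite !mxE !big_ord_recr big_ord0 /= !mxE add0r.
by case: i => [[|[|[|//]]] ?]; case: j => [[|[|[|//]]] ?].
Qed.

Lemma mulmx3_col a00 a01 a02 a10 a11 a12 a20 a21 a22 x0 x1 x2 :
  mx3 a00 a01 a02 a10 a11 a12 a20 a21 a22 *m col3 x0 x1 x2 =
  col3 (a00*x0+a01*x1+a02*x2) (a10*x0+a11*x1+a12*x2) (a20*x0+a21*x1+a22*x2).
Proof.
apply/matrixP => i j; rewrite !mxE !big_ord_recr big_ord0 /= !mxE add0r.
by case: i => [[|[|[|//]]] ?].
Qed.

Lemma map_trmx3 (f : R -> R) a00 a01 a02 a10 a11 a12 a20 a21 a22 :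
  (map_mx f (mx3 a00 a01 a02 a10 a11 a12 a20 a21 a22))^T =
  mx3 (f a00) (f a10) (f a20) (f a01) (f a11) (f a21) (f a02) (f a12) (f a22).
Proof.
apply/matrixP => i j; rewrite !mxE.
by case: i => [[|[|[|//]]] ?]; case: j => [[|[|[|//]]] ?].
Qed.

Lemma det_mx3 a00 a01 a02 a10 a11 a12 a20 a21 a22 :
  \det (mx3 a00 a01 a02 a10 a11 a12 a20 a21 a22) =
  a00 * (a11 * a22 - a12 * a21) - a01 * (a10 * a22 - a12 * a20)
    + a02 * (a10 * a21 - a11 * a20).
Proof.
rewrite (expand_det_row _ 0) !big_ord_recr big_ord0 /= add0r /cofactor.
rewrite !(expand_det_row _ ord0) !big_ord_recr big_ord0 /= !add0r /cofactor.
by rewrite !det_mx11 !mxE /= !big_ord0; ring.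
Qed.

End Coordinates3.

Arguments e0 {R}.

Lemma Jmx_mx3 (F : fieldType) : Jmx F = mx3 0 0 1 0 1 0 1 0 0.
Proof.
apply/matrixP => i j; rewrite !mxE.
by case: i => [[|[|[|//]]] ?]; case: j => [[|[|[|//]]] ?].
Qed.

Lemma transv_mx3 (F : fieldType) (b : F) : transv b = mx3 1 0 b 0 1 0 0 0 1.
Proof.
apply/matrixP => i j; rewrite !mxE.
by case: i => [[|[|[|//]]] ?]; case: j => [[|[|[|//]]] ?]; rewrite /= ?mulr0 ?mulr1 ?addr0 ?add0r.
Qed.

Lemma det_transv (F : fieldType) (b : F) : \det (transv b) = 1.
Proof. by rewrite transv_mx3 det_mx3; ring. Qed.

Section HermitianForm.
Variables (F : fieldType) (s : {rmorphism F -> F}).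
Hypothesis sK : involutive s.

Local Notation J := (Jmx F).

Definition adjmx m n (A : 'M[F]_(m, n)) : 'M[F]_(n, m) := (map_mx s A)^T.

Lemma adjmxM m n r (A : 'M[F]_(m, n)) (B : 'M[F]_(n, r)) :
  adjmx (A *m B) = adjmx B *m adjmx A.
Proof. by rewrite /adjmx map_mxM trmx_mul. Qed.

Lemma adjmxD m n (A B : 'M[F]_(m, n)) : adjmx (A + B) = adjmx A + adjmx B.
Proof. by rewrite /adjmx map_mxD linearD. Qed.

Lemma adjmxZ m n c (A : 'M[F]_(m, n)) : adjmx (c *: A) = s c *: adjmx A.
Proof. by rewrite /adjmx map_mxZ linearZ. Qed.

Lemma adjmxK m n : cancel (@adjmx m n) (@adjmx n m).
Proof. by move=> A; apply/matrixP => i j; rewrite !mxE sK. Qed.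

Lemma adjmx1 n : adjmx (1%:M : 'M[F]_n) = 1%:M.
Proof. by rewrite /adjmx map_mx1 trmx1. Qed.

Lemma adjmxJ : adjmx J = J.
Proof.
apply/matrixP => i j; rewrite !mxE addnC.
by case: ifP; rewrite ?rmorph0 ?rmorph1.
Qed.

Definition hform (u w : 'cV[F]_3) : F := (adjmx u *m J *m w) 0 0.

Definition isotropic u := hform u u == 0.

Definition unitarymx (M : 'M[F]_3) := adjmx M *m J *m M == J.

Lemma hform_mx u w : adjmx u *m J *m w = (hform u w)%:M.
Proof. exact: mx11_scalar. Qed.

Lemma hformDl u v w : hform (u + v) w = hform u w + hform v w.
Proof. by rewrite /hform adjmxD !mulmxDl mxE. Qed.

Lemma hformZl c u w : hform (c *: u) w = s c * hform u w.
Proof. by rewrite /hform adjmxZ -!scalemxAl mxE. Qed.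

Lemma hformDr u v w : hform u (v + w) = hform u v + hform u w.
Proof. by rewrite /hform mulmxDr mxE. Qed.

Lemma hformZr c u w : hform u (c *: w) = c * hform u w.
Proof. by rewrite /hform -scalemxAr mxE. Qed.

Lemma hformNr u w : hform u (- w) = - hform u w.
Proof. by rewrite -scaleN1r hformZr mulN1r. Qed.

Lemma hformC u w : s (hform u w) = hform w u.
Proof.
have adjmx11 (X : 'M[F]_1) : s (X 0 0) = adjmx X 0 0 by rewrite !mxE.
by rewrite adjmx11 !adjmxM adjmxK adjmxJ mulmxA.
Qed.

Lemma hform_col3 x0 x1 x2 y0 y1 y2 :
  hform (col3 x0 x1 x2) (col3 y0 y1 y2) = s x0 * y2 + s x1 * y1 + s x2 * y0.
Proof.
rewrite /hform Jmx_mx3 -mulmxA mulmx3_col !mxE !big_ord_recr big_ord0 /= !mxE /=.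
by rewrite !mul0r !mul1r !addr0 !add0r.
Qed.

Lemma hform_unitarymx M u w : unitarymx M -> hform (M *m u) (M *m w) = hform u w.
Proof.
move=> /eqP uM.
by rewrite /hform adjmxM !mulmxA -(mulmxA _ _ J) -(mulmxA _ _ M) uM.
Qed.

Lemma unitarymx_mul A B : unitarymx A -> unitarymx B -> unitarymx (A *m B).
Proof.
move=> /eqP uA /eqP uB; apply/eqP.
by rewrite adjmxM !mulmxA -(mulmxA (adjmx B)) -(mulmxA (adjmx B)) uA uB.
Qed.

Lemma adjmx_invmx_J M : M \in unitmx -> unitarymx M -> adjmx (invmx M) *m J = J *m M.
Proof.
move=> Mu /eqP uM.
by rewrite -{1}uM !mulmxA -adjmxM mulmxV // adjmx1 mul1mx.
Qed.

Lemma unitarymx_inv M : M \in unitmx -> unitarymx M -> unitarymx (invmx M).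
Proof.
by move=> Mu uM; rewrite /unitarymx adjmx_invmx_J // -mulmxA mulmxV // mulmx1.
Qed.

Definition transvection (u : 'cV[F]_3) (b : F) : 'M[F]_3 :=
  1%:M + b *: (u *m adjmx u *m J).

Lemma transvection0 u : transvection u 0 = 1%:M.
Proof. by rewrite /transvection scale0r addr0. Qed.

Lemma transvection_mulmx u b x :
  transvection u b *m x = x + (b * hform u x) *: u.
Proof.
rewrite mulmxDl mul1mx -scalemxAl.
have -> : u *m adjmx u *m J *m x = u *m (adjmx u *m J *m x) by rewrite !mulmxA.
by rewrite hform_mx mul_mx_scalar scalerA.
Qed.

Lemma transvectionD u b c : isotropic u ->
  transvection u b *m transvection u c = transvection u (b + c).
Proof.
move=> /eqP iso; set N := u *m adjmx u *m J.
have NN : N *m N = 0.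
  have -> : N *m N = u *m (adjmx u *m J *m u) *m adjmx u *m J by rewrite !mulmxA.
  by rewrite hform_mx iso mul_mx_scalar scale0r !mul0mx.
rewrite /transvection mulmxDl mul1mx mulmxDr mulmx1 -scalemxAl -scalemxAr NN.
by rewrite !scaler0 addr0 scalerDl addrA addrAC.
Qed.

Lemma transvectionZ u c b :
  transvection (c *: u) b = transvection u (b * (c * s c)).
Proof.
by rewrite /transvection adjmxZ -scalemxAr -!scalemxAl !scalerA mulrAC mulrA.
Qed.

Lemma adjmx_transvection u b :
  adjmx (transvection u b) *m J = J *m transvection u (s b).
Proof.
rewrite /transvection adjmxD adjmx1 adjmxZ !adjmxM adjmxJ adjmxK.
by rewrite mulmxDl mul1mx mulmxDr mulmx1 -scalemxAl -scalemxAr !mulmxA.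
Qed.

Lemma transvection_unitary u b : isotropic u -> s b = - b ->
  unitarymx (transvection u b).
Proof.
move=> iso sb; apply/eqP.
by rewrite adjmx_transvection -mulmxA transvectionD // sb addNr transvection0 mulmx1.
Qed.

Lemma transvectionJ M u b : M \in unitmx -> unitarymx M ->
  invmx M *m transvection u b *m M = transvection (invmx M *m u) b.
Proof.
move=> Mu uM; rewrite /transvection mulmxDr mulmxDl mulmx1 mulVmx //.
by rewrite -scalemxAr -scalemxAl adjmxM -!mulmxA adjmx_invmx_J.
Qed.

Lemma transvection_commute M z b : M \in unitmx -> unitarymx M -> M *m z = - z ->
  transvection z b *m M = M *m transvection z b.
Proof.
move=> Mu uM Mz.
have Miz : invmx M *m z = - z by rewrite -{1}(opprK z) -Mz mulmxN mulKmx.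
have := transvectionJ z b Mu uM.
rewrite Miz -scaleN1r transvectionZ rmorphN1 mulN1r opprK mulr1.
by move/(congr1 (mulmx M)); rewrite !mulmxA mulmxV // mul1mx.
Qed.

Section PairedIsotropic.
Variables (u w : 'cV[F]_3) (b : F).
Hypotheses (iu : isotropic u) (iw : isotropic w) (sb : s b = - b).
Hypothesis buw : b * hform u w = 2.

Lemma hform_pair_sym : b * hform w u = - 2.
Proof.
apply/eqP; rewrite -eqr_oppLR -mulNr -sb -hformC -rmorphM buw.
by rewrite rmorph_nat.
Qed.

Lemma transvection_pair_mulmx :
  transvection u b *m (transvection w b *m (u + w)) = - (u + w).
Proof.
have -> : transvection w b *m (u + w) = u - w.
  rewrite transvection_mulmx hformDr (eqP iw) addr0 hform_pair_sym.
  by rewrite scaleNr scaler_nat mulr2n opprD addrA addrK.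
rewrite transvection_mulmx hformDr hformNr (eqP iu) add0r mulrN buw.
by rewrite scaleNr scaler_nat mulr2n opprD addrA addrAC subrr add0r opprD addrC.
Qed.

Hypothesis two_neq0 : 2 != 0 :> F.

Lemma isotropic_pair_sum : isotropic (u + w).
Proof.
have b_neq0 : b != 0 by apply: contra_eq_neq buw => ->; rewrite mul0r eq_sym.
move: iu iw; rewrite /isotropic !(hformDl, hformDr) => /eqP-> /eqP->.
rewrite add0r addr0 -(mulrI_eq0 _ (lregP b_neq0)) mulrDr buw.
by rewrite hform_pair_sym subrr.
Qed.

Lemma pair_sum_neq0 : u + w != 0.
Proof.
apply: contra_eq_neq buw => uw0; rewrite -[w](addKr u) uw0 addr0 hformNr.
by rewrite (eqP iu) oppr0 mulr0 eq_sym.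
Qed.

End PairedIsotropic.

Lemma hform_e0 v : hform e0 v = v 2 0.
Proof.
by rewrite {1}[v]col3_eta hform_col3 rmorph1 rmorph0 !mul0r !addr0 mul1r.
Qed.

Lemma isotropic_e0 : isotropic e0.
Proof. by rewrite /isotropic hform_e0 mxE. Qed.

Lemma isotropic_orth_e0 v : isotropic v -> hform e0 v = 0 -> v = v 0 0 *: e0.
Proof.
rewrite /isotropic hform_e0 {1 2}[v]col3_eta hform_col3 => /eqP iso v2z.
have v1z : v 1 0 = 0.
  move: iso; rewrite v2z rmorph0 mul0r mulr0 addr0 add0r => /eqP.
  by rewrite mulf_eq0 fmorph_eq0 orbb => /eqP.
by rewrite {1}[v]col3_eta v1z v2z scale_col3 mulr1 mulr0.
Qed.

Lemma transvection_e0 b : transvection e0 b = mx3 1 0 b 0 1 0 0 0 1.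
Proof.
apply/matrixP => i j; rewrite !mxE !big_ord_recr big_ord0 !mxE !big_ord1 !mxE /=.
rewrite rmorph0 rmorph1.
by case: i => [[|[|[|//]]] ?]; case: j => [[|[|[|//]]] ?] /=; ring.
Qed.

Lemma isotropic_transitive v : isotropic v -> v != 0 ->
  exists M, [/\ \det M = 1, unitarymx M & M *m e0 = v].
Proof.
move=> iv v_neq0; have [e0v | ] := eqVneq (hform e0 v) 0.
  move: v_neq0; rewrite (isotropic_orth_e0 iv e0v) scaler_eq0 negb_or => /andP[x0_neq0 _].
  move: (v 0 0) x0_neq0 => x0 x0_neq0; have sx0_neq0 : s x0 != 0 by rewrite fmorph_eq0.
  exists (mx3 x0 0 0 0 (s x0 / x0) 0 0 0 (s x0)^-1); split.
  - by rewrite det_mx3; field; rewrite x0_neq0 sx0_neq0.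
  - rewrite /unitarymx /adjmx map_trmx3 Jmx_mx3 !mulmx3; apply/eqP.
    by congr mx3; rewrite ?rmorph0 ?rmorphM ?fmorphV ?sK; field; rewrite ?x0_neq0 ?sx0_neq0.
  - by rewrite /e0 mulmx3_col scale_col3; congr col3; ring.
move: iv; rewrite /isotropic [v]col3_eta hform_e0 mxE hform_col3 /=.
move: (v 0 0) (v 1 0) (v 2 0) => x0 x1 x2 /eqP iso x2_neq0.
have sx2_neq0 : s x2 != 0 by rewrite fmorph_eq0.
(* The columns v, c1, c2 have Gram matrix J: h(v, c2) = h(c1, c1) = 1, all other
   products vanish, the last one h(v, v) by isotropy. *)
exists (mx3 x0 (s x1 / x2) (s x2)^-1 x1 (- s x2 / x2) 0 x2 0 0); split.
- by rewrite det_mx3; field; rewrite x2_neq0 sx2_neq0.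
- rewrite /unitarymx /adjmx map_trmx3 Jmx_mx3 !mulmx3; apply/eqP.
  by congr mx3; rewrite ?rmorph0 ?rmorphM ?fmorphV ?rmorphN ?sK;
    first [rewrite -[RHS]iso; ring | field; rewrite ?x2_neq0 ?sx2_neq0].
- by rewrite /e0 mulmx3_col; congr col3; ring.
Qed.

End HermitianForm.

Section SpecialUnitaryGroup.
Variables (F : finFieldType) (q : nat) (s : {rmorphism F -> F}).
Hypotheses (sE : forall x, s x = x ^+ q) (sK : involutive s).

Local Notation SU := (SU3 F q).

Lemma qstarE M : qstar q M = adjmx s M.
Proof. by rewrite /qstar /adjmx; congr _^T; apply: eq_map_mx => x; rewrite sE. Qed.

Lemma SU3E g : (g \in SU) = (\det (GLval g) == 1) && unitarymx s (GLval g).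
Proof. by rewrite inE qstarE. Qed.

Lemma SU3_group_set : group_set SU.
Proof.
apply/group_setP; split=> [|g h]; rewrite !SU3E.
  by rewrite GL_1E det1 eqxx /unitarymx adjmx1 mul1mx mulmx1 eqxx.
case/andP=> [/eqP dg ug] /andP[/eqP dh uh].
by rewrite GL_MxE det_mulmx dg dh mulr1 eqxx unitarymx_mul.
Qed.

Canonical SU3_group := Group SU3_group_set.

Variable a : F.
Hypotheses (two_neq0 : 2 != 0 :> F) (a_neq0 : a != 0) (sa : s a = - a).

Local Notation C := (C20 q a).
Local Notation T := (transvection s).
Local Notation adj := (killing_adj SU C).

Lemma transv_transvection : transv a = T e0 a.
Proof. by rewrite transvection_e0 transv_mx3. Qed.

Definition t0 : {'GL_3[F]} := GLof (transv a).

Lemma t0E : GLval t0 = transv a.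
Proof. by rewrite GLofK // unitmxE det_transv unitr1. Qed.

Lemma t0_SU : t0 \in SU.
Proof.
by rewrite SU3E t0E det_transv eqxx transv_transvection transvection_unitary ?isotropic_e0.
Qed.

Lemma C20_class : C = (t0 ^: SU)%g.
Proof.
apply/setP => g; rewrite inE.
apply/existsP/imsetP => [[h /andP[hSU /eqP gE]] | [h hSU ->]].
  by exists h => //; apply: GLval_inj; rewrite GL_conjgE gE t0E.
by exists h; rewrite hSU GL_conjgE t0E eqxx.
Qed.

Lemma t0_C20 : t0 \in C.
Proof. by rewrite C20_class class_refl. Qed.

Lemma C20_sub_SU : C \subset SU.
Proof. by rewrite C20_class class_subG ?t0_SU. Qed.

Lemma SU_norm_C20 : SU \subset 'N(C)%g.
Proof. by rewrite C20_class class_norm. Qed.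

Lemma C20_transvection g : g \in C ->
  exists2 v, isotropic s v && (v != 0) & GLval g = T v a.
Proof.
rewrite C20_class => /imsetP[h hSU ->]; move: hSU; rewrite SU3E => /andP[_ uh].
have hu : GLval h \in unitmx := GL_unitmx h.
exists (invmx (GLval h) *m e0).
  rewrite /isotropic hform_unitarymx ?unitarymx_inv // (eqP (isotropic_e0 s)) eqxx /=.
  apply: contra_neq (oner_neq0 F) => /(congr1 (mulmx (GLval h))).
  by rewrite mulKVmx // mulmx0 => /matrixP/(_ 0 0); rewrite !mxE.
by rewrite GL_conjgE t0E transv_transvection transvectionJ.
Qed.

Lemma transvection_C20 v : isotropic s v -> v != 0 ->
  exists2 g, g \in C & GLval g = T v a.
Proof.
move=> iv v_neq0; have [M [detM uM Me0]] := isotropic_transitive sK iv v_neq0.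
have Mu : M \in unitmx by rewrite unitmxE detM unitr1.
pose h := GLof M; have hE : GLval h = M by rewrite GLofK.
have hSU : h \in SU by rewrite SU3E hE detM eqxx.
exists (t0 ^ h^-1)%g; first by rewrite C20_class memJ_class ?groupV.
rewrite GL_conjgE GL_VxE hE invmxK t0E transv_transvection -{1}[M]invmxK.
by rewrite transvectionJ ?unitmx_inv ?unitarymx_inv // invmxK Me0.
Qed.

Lemma connect_commuting g1 g2 : g1 \in C -> g2 \in C ->
  GLval g1 *m GLval g2 = GLval g2 *m GLval g1 -> connect adj g1 g2.
Proof.
move=> g1C g2C g12; apply: (killing_connect_commute C20_sub_SU g1C g2C g1C).
by apply/commuteM/GLval_inj; rewrite ?GL_MxE.
Qed.

Lemma connect_paired u w g1 g2 :
  isotropic s u -> isotropic s w -> a * hform s u w = 2 ->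
  g1 \in C -> g2 \in C -> GLval g1 = T u a -> GLval g2 = T w a -> connect adj g1 g2.
Proof.
move=> iu iw auw g1C g2C g1E g2E.
have [c cC cE] := transvection_C20 (isotropic_pair_sum sK iu iw sa auw two_neq0)
  (pair_sum_neq0 iu auw two_neq0).
apply: (killing_connect_commute C20_sub_SU g1C g2C cC); apply: GLval_inj.
set M := GLval (g1 * g2)%g; have Mu : M \in unitmx := GL_unitmx (g1 * g2)%g.
have [_ uM] : \det M == 1 /\ unitarymx s M.
  by apply/andP; rewrite -SU3E groupM ?(subsetP C20_sub_SU).
have Mz : M *m (u + w) = - (u + w).
  by rewrite /M GL_MxE g1E g2E -mulmxA transvection_pair_mulmx.
by rewrite (GL_MxE c) (GL_MxE _ c) -/M cE transvection_commute.
Qed.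

Lemma connect_t0 g : g \in C -> connect adj t0 g.
Proof.
move=> gC; have [v /andP[iv v_neq0] gE] := C20_transvection gC.
have t0T : GLval t0 = T e0 a by rewrite t0E transv_transvection.
have [e0v | e0v_neq0] := eqVneq (hform s e0 v) 0.
  apply: connect_commuting t0_C20 gC _.
  rewrite t0T gE (isotropic_orth_e0 iv e0v) transvectionZ.
  by rewrite !transvectionD ?isotropic_e0 // addrC.
pose w := (2 / (a * hform s e0 v)) *: v.
have iw : isotropic s w by rewrite /isotropic hformZl hformZr (eqP iv) !mulr0.
have w_neq0 : w != 0.
  by rewrite scaler_eq0 negb_or v_neq0 andbT !mulf_neq0 ?invr_eq0 ?mulf_neq0.
have [gw gwC gwE] := transvection_C20 iw w_neq0.
apply: (connect_trans (connect_paired (isotropic_e0 s) iw _ t0_C20 gwC t0T gwE)).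
  by rewrite hformZr; field; rewrite a_neq0 e0v_neq0.
apply: connect_commuting gwC gC _.
by rewrite gwE gE transvectionZ !transvectionD // addrC.
Qed.

Theorem SU3_killing_irreducible : killing_irreducible SU C.
Proof.
move=> g h gC hC; apply: connect_trans (connect_t0 hC).
by rewrite (sym_connect_sym (killing_adj_sym C20_sub_SU SU_norm_C20)) connect_t0.
Qed.

End SpecialUnitaryGroup.

Section FrobeniusPower.
Variables (F : finFieldType) (p k : nat).
Hypothesis pcharFp : p \in [pchar F].

Definition frobenius_power (x : F) := x ^+ (p ^ k).

Lemma frobenius_power_is_nmod_morphism : nmod_morphism frobenius_power.
Proof.
have p_pr := pcharf_prime pcharFp.
split=> [|x y]; first by rewrite /frobenius_power expr0n expn_eq0 eqn0Ngt prime_gt0.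
by rewrite /frobenius_power exprDn_pchar // pnatX (pnatE _ p_pr) pcharFp.
Qed.

Lemma frobenius_power_is_monoid_morphism : monoid_morphism frobenius_power.
Proof. by split=> [|x y]; rewrite /frobenius_power ?expr1n ?exprMn. Qed.

HB.instance Definition _ := GRing.isNmodMorphism.Build F F frobenius_power
  frobenius_power_is_nmod_morphism.
HB.instance Definition _ := GRing.isMonoidMorphism.Build F F frobenius_power
  frobenius_power_is_monoid_morphism.

Lemma frobenius_power_rmorphism :
  exists s : {rmorphism F -> F}, forall x, s x = x ^+ (p ^ k).
Proof. by exists frobenius_power. Qed.

End FrobeniusPower.

Theorem corollary4p6 (F : finFieldType) (p k : nat) (a : F) :
  prime p -> odd p -> (0 < k)%N ->
  #|F| = ((p ^ k) ^ 2)%N ->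
  a != 0 -> a + a ^+ (p ^ k) = 0 ->
  killing_irreducible (SU3 F (p ^ k)) (C20 (p ^ k) a).
Proof.
move=> p_pr p_odd _ cardF a_neq0 a_trace0.
have pcharFp : p \in [pchar F].
  by apply: (card_finPcharP (n := (k * 2)%N)); rewrite // expnM.
have [s sE] := frobenius_power_rmorphism k pcharFp.
have sK : involutive s by move=> x; rewrite !sE -exprM mulnn -cardF expf_card.
have two_neq0 : 2 != 0 :> F.
  by rewrite -(dvdn_pcharf pcharFp) dvdn_prime2 //; apply: contraTneq p_odd => ->.
have sa : s a = - a by rewrite sE; apply/eqP; rewrite -addr_eq0 addrC a_trace0.
exact: (SU3_killing_irreducible sE sK two_neq0 a_neq0 sa).
Qed.
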